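(* For every integer $Q \ge 2$, let $F_Q = \{a/q : 1 \le a \le q \le Q,\ \gcd(a,q) = 1\}$ be the $Q$-th Farey sequence, with elements listed in increasing order as $\gamma_1 < \gamma_2 < \cdots < \gamma_{N}$, where $N = |F_Q|$. Define $$S_2(Q) = \sum_{j=1}^{N-1} (\gamma_{j+1} - \gamma_j)^2 \quad\text{and}\quad C(Q) = \frac{S_2(Q)\, Q^2}{\log Q}.$$ Then $C(Q) < 3$ for all integers $Q > 1$.
   Context: $\log$ denotes the natural logarithm. *)

From HB Require Import structures.
From mathcomp Require Import all_boot all_order all_algebra.
From mathcomp Require Import all_classical all_reals all_analysis.
Set Implicit Arguments. Unset Strict Implicit. Unset Printing Implicit Defensive.
Import Order.TTheory GRing.Theory Num.Theory.
Local Open Scope ring_scope.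

Definition farey (Q : nat) : seq rat :=
  sort <=%R (undup
    [seq (a%:R / q%:R : rat) | q <- iota 1 Q, a <- [seq a <- iota 1 q | coprime a q]]).

Definition S2 (Q : nat) : rat :=
  let s := farey Q in
  \sum_(j < (size s).-1) (s`_j.+1 - s`_j) ^+ 2.

Definition C {R : realType} (Q : nat) : R :=
  ratr (S2 Q) * (Q%:R) ^+ 2 / ln (Q%:R : R).

From HB Require Import structures.
From mathcomp Require Import all_boot all_order all_algebra.
From mathcomp Require Import all_classical all_reals all_analysis.
From mathcomp Require Import ring lra zify.
Import Order.TTheory GRing.Theory Num.Theory.
Local Open Scope ring_scope.
Set Implicit Arguments. Unset Strict Implicit. Unset Printing Implicit Defensive.

(* Let x = a/q < 1 be in F_Q and pick r in (Q - q, Q] with q | a r + 1, i.e.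
   r = -a^-1 mod q.  Then x + 1/(q r) = (a r + 1)/(q r) has denominator at most
   r <= Q, so it lies in F_Q and the gap after x is at most 1/(q r).  As q and r
   determine a, S_2(Q) is at most the sum of 1/(q r)^2 over 2 <= q <= Q and
   Q - q < r <= Q.  Telescoping 1/r^2 <= 2/(2r-1) - 2/(2r+1) and the partial
   fractions 1/(q (2Q+1-2q)) = (1/q + 2/(2Q+1-2q))/(2Q+1) bound this by
   4/(2Q+1)^2 times a sum of reciprocals, and the Pade bound
   2(b-a)/(b+a) <= ln b - ln a turns that sum into 2 ln Q + 8/5.  The final
   inequality 4 Q^2 (2 ln Q + 8/5) < 3 (2Q+1)^2 ln Q uses the same bound for ln Q. *)

Lemma exists_dvdn_mulS (a q Q : nat) : (0 < q)%N -> coprime a q -> (q <= Q)%N ->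
  exists2 r, (r <= Q < q + r)%N & (q %| a * r + 1)%N.
Proof.
move=> q_gt0 co qQ; have [u uq] := Bezoutl a q_gt0.
rewrite gcdnC (eqP co) => q_dvd; exists (u + q * ((Q - u) %/ q))%N.
  by have := divn_eq (Q - u) q; have := ltn_pmod (Q - u) q_gt0; lia.
have -> : (a * (u + q * ((Q - u) %/ q)) + 1 = (1 + u * a) + q * (a * ((Q - u) %/ q)))%N.
  by ring.
by rewrite dvdn_add // dvdn_mulr.
Qed.

Lemma dvdn_mulS_inj (q r a a' : nat) : (a < q)%N -> (a' < q)%N ->
  (q %| a * r + 1)%N -> (q %| a' * r + 1)%N -> a = a'.
Proof.
wlog le_a'a : a a' / (a' <= a)%N.
  move=> wlog aq a'q dq dq'; case: (leqP a' a) => [|/ltnW] le; first exact: wlog.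
  by symmetry; apply: wlog.
move=> aq _ dq dq'.
have co : coprime q r.
  have g_dvd1 : (gcdn q r %| 1)%N.
    rewrite -(dvdn_addr 1 (dvdn_mull a (dvdn_gcdr q r))).
    exact: dvdn_trans (dvdn_gcdl q r) dq.
  by rewrite /coprime -dvdn1.
have : (q %| (a - a') * r)%N.
  have -> : ((a - a') * r = (a * r + 1) - (a' * r + 1))%N by rewrite mulnBl; lia.
  exact: dvdn_sub.
rewrite Gauss_dvdl //; case: (posnP (a - a')) => [|pos /(dvdn_leq pos)]; lia.
Qed.

Lemma lt_sorted_nth_next d (T : porderType d) (x0 : T) (s : seq T) j z :
  sorted <%O s -> (j.+1 < size s)%N -> z \in s -> (nth x0 s j < z)%O ->
  (nth x0 s j.+1 <= z)%O.
Proof.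
move=> ss js zs; have jls : (j < size s)%N := ltnW js.
by rewrite -(nth_index x0 zs) (lt_sorted_ltn_nth x0 ss) ?(lt_sorted_leq_nth x0 ss)
  ?inE ?index_mem.
Qed.

Lemma ler_sum_inj (R : numDomainType) (I J : finType) (h : I -> J) (P : pred J)
    (F : J -> R) :
  injective h -> (forall i, P (h i)) -> (forall j, P j -> 0 <= F j) ->
  \sum_i F (h i) <= \sum_(j | P j) F j.
Proof.
move=> h_inj Ph F_ge0; rewrite -(big_imset _ (in2W h_inj)) /=.
rewrite big_mkcond [X in _ <= X]big_mkcond; apply: ler_sum => j _.
case: ifP => [/imsetP[i _ ->]|_]; first by rewrite Ph.
by case: ifP => // /F_ge0.
Qed.

Lemma ler_sum_telescope (R : numDomainType) (m n : nat) (F u : nat -> R) : (m <= n)%N ->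
  (forall k, (m <= k < n)%N -> F k <= u k.+1 - u k) -> \sum_(m <= k < n) F k <= u n - u m.
Proof. by move=> mn Fu; rewrite -telescope_sumr //; exact: ler_sum_nat. Qed.

Definition numn (x : rat) : nat := `|numq x|%N.
Definition denn (x : rat) : nat := `|denq x|%N.

Lemma denn_gt0 x : (0 < denn x)%N.
Proof. by rewrite absz_gt0 denq_eq0. Qed.

Lemma numn_gt0 x : 0 < x -> (0 < numn x)%N.
Proof. by move=> x_gt0; rewrite absz_gt0 numq_eq0 gt_eqF. Qed.

Lemma coprime_numn_denn x : coprime (numn x) (denn x).
Proof. exact: coprime_num_den. Qed.

Lemma divq_numn_denn x : 0 <= x -> (numn x)%:R / (denn x)%:R = x.
Proof.
move=> x_ge0; rewrite !natr_absz !ger0_norm ?numq_ge0 ?denq_ge0 //.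
exact: divq_num_den.
Qed.

Lemma denn_frac (a q : nat) : (0 < q)%N -> coprime a q -> denn (a%:R / q%:R) = q.
Proof. by case: q => // q _ /(@coprimeq_den a q.+1); rewrite /denn => ->. Qed.

Lemma denn_frac_leq (b r : nat) : (0 < r)%N -> (denn (b%:R / r%:R) <= r)%N.
Proof.
case: r => // r _; have -> : (b%:R / r.+1%:R : rat) = fracq (b%:Z, r.+1%:Z).
  by rewrite fracqE.
by rewrite /denn den_fracq /= leq_div.
Qed.

Lemma ler1_numn_denn x : 0 < x -> (x <= 1) = (numn x <= denn x)%N.
Proof.
move=> x_gt0; rewrite -{1}(divq_numn_denn (ltW x_gt0)).
by rewrite ler_pdivrMr ?ltr0n ?denn_gt0 // mul1r ler_nat.
Qed.

Lemma ltr1_numn_denn x : 0 < x -> (x < 1) = (numn x < denn x)%N.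
Proof.
move=> x_gt0; rewrite -{1}(divq_numn_denn (ltW x_gt0)).
by rewrite ltr_pdivrMr ?ltr0n ?denn_gt0 // mul1r ltr_nat.
Qed.

Lemma mem_farey Q x : (x \in farey Q) = (0 < x <= 1) && (denn x <= Q)%N.
Proof.
rewrite /farey mem_sort mem_undup; apply/allpairsPdep/idP.
  move=> [q [a [+ + ->]]]; rewrite mem_iota mem_filter mem_iota => qQ /andP[co aq].
  have q_gt0 : (0 < q)%N by lia.
  have a_gt0 : 0 < a%:R / q%:R :> rat by rewrite divr_gt0 // ltr0n; lia.
  rewrite denn_frac // a_gt0 ler_pdivrMr ?ltr0n // mul1r ler_nat; lia.
move=> /andP[/andP[x_gt0 x_le1] xQ]; exists (denn x), (numn x).
rewrite divq_numn_denn ?ltW // mem_iota mem_filter mem_iota coprime_numn_denn.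
have := numn_gt0 x_gt0; have := denn_gt0 x; rewrite ler1_numn_denn // in x_le1.
by move=> *; split=> //; lia.
Qed.

Lemma farey_sorted Q : sorted <%R (farey Q).
Proof. by rewrite sort_lt_sorted undup_uniq. Qed.

Definition farey_partner Q x : 'I_Q.+1 :=
  odflt ord0 [pick r : 'I_Q.+1 | (Q < denn x + r)%N && (denn x %| numn x * r + 1)%N].

Lemma farey_partnerP Q x : x \in farey Q ->
  (Q < denn x + farey_partner Q x)%N && (denn x %| numn x * farey_partner Q x + 1)%N.
Proof.
rewrite mem_farey => /andP[_ xQ]; rewrite /farey_partner; case: pickP => [r -> //|no_r].
have [r /andP[rQ Qr] dvd] := exists_dvdn_mulS (denn_gt0 x) (coprime_numn_denn x) xQ.
by have := no_r (Ordinal (rQ : (r < Q.+1)%N)); rewrite /= Qr dvd.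
Qed.

Lemma mem_farey_add_inv Q x (r : nat) : x \in farey Q -> x < 1 -> (0 < r <= Q)%N ->
  (denn x %| numn x * r + 1)%N -> x + ((denn x * r)%:R)^-1 \in farey Q.
Proof.
rewrite mem_farey => /andP[/andP[x_gt0 _] _] x_lt1 /andP[r_gt0 rQ] /dvdnP[b bE].
have q_gt0 := denn_gt0 x; have a_lt_q : (numn x < denn x)%N by rewrite -ltr1_numn_denn.
have -> : x + ((denn x * r)%:R)^-1 = b%:R / r%:R.
  have bE' : b%:R * (denn x)%:R = (numn x)%:R * r%:R + 1 :> rat.
    by rewrite -!natrM natr1 -bE addn1.
  have q_neq0 : (denn x)%:R != 0 :> rat by rewrite pnatr_eq0 -lt0n.
  have r_neq0 : r%:R != 0 :> rat by rewrite pnatr_eq0 -lt0n.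
  rewrite -{1}(divq_numn_denn (ltW x_gt0)) -[b%:R](mulfK q_neq0) bE' natrM.
  by field; rewrite q_neq0 r_neq0.
have b_gt0 : (0 < b)%N by case: b bE; rewrite // addn1.
rewrite mem_farey divr_gt0 ?ltr0n // ler_pdivrMr ?ltr0n // mul1r ler_nat.
rewrite (leq_trans (denn_frac_leq _ r_gt0)) // andbT.
by rewrite -(leq_pmul2r q_gt0) -bE; nia.
Qed.

Lemma farey_next_sub_le Q x y : x \in farey Q -> x < y -> y <= 1 ->
  (forall z, z \in farey Q -> x < z -> y <= z) ->
  y - x <= ((denn x * farey_partner Q x)%:R)^-1.
Proof.
move=> xF xy y_le1 y_min; have /andP[Qr dvd] := farey_partnerP xF.
have r_gt0 : (0 < farey_partner Q x)%N.
  by move: xF; rewrite mem_farey => /andP[_]; lia.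
have rQ : (farey_partner Q x <= Q)%N by rewrite -ltnS.
rewrite lerBlDl; apply: y_min.
  by rewrite mem_farey_add_inv ?r_gt0 ?(lt_le_trans xy).
by rewrite ltrDl invr_gt0 ltr0n muln_gt0 denn_gt0.
Qed.

Definition farey_pair Q x : 'I_Q.+1 * 'I_Q.+1 := (inord (denn x), farey_partner Q x).

Lemma farey_pair1 Q x : x \in farey Q -> (farey_pair Q x).1 = denn x :> nat.
Proof. by rewrite mem_farey => /andP[_ xQ]; rewrite inordK. Qed.

Lemma farey_pairP Q x : x \in farey Q -> x < 1 ->
  (1 < (farey_pair Q x).1)%N && (Q < (farey_pair Q x).1 + (farey_pair Q x).2)%N.
Proof.
move=> xF; rewrite farey_pair1 //; have /andP[-> _] := farey_partnerP xF.
move: xF; rewrite mem_farey andbT => /andP[/andP[x_gt0 _] _].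
by rewrite ltr1_numn_denn //; have := numn_gt0 x_gt0; lia.
Qed.

Lemma farey_pair_inj Q x x' : x \in farey Q -> x' \in farey Q -> x < 1 -> x' < 1 ->
  farey_pair Q x = farey_pair Q x' -> x = x'.
Proof.
move=> xF x'F x_lt1 x'_lt1 e.
have qE : denn x = denn x' by rewrite -(farey_pair1 xF) -(farey_pair1 x'F) e.
have rE : farey_partner Q x = farey_partner Q x' by case: e.
have /andP[_ dvd] := farey_partnerP xF; have /andP[_ dvd'] := farey_partnerP x'F.
move: xF x'F; rewrite !mem_farey => /andP[/andP[x_gt0 _] _] /andP[/andP[x'_gt0 _] _].
rewrite -(divq_numn_denn (ltW x_gt0)) -(divq_numn_denn (ltW x'_gt0)) -qE.
rewrite ltr1_numn_denn // in x_lt1; rewrite ltr1_numn_denn // in x'_lt1.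
rewrite -qE -rE in x'_lt1 dvd'.
by rewrite (dvdn_mulS_inj x_lt1 x'_lt1 dvd dvd').
Qed.

Definition pair_sum (R : numFieldType) (Q : nat) : R :=
  \sum_(p : 'I_Q.+1 * 'I_Q.+1 | (1 < p.1)%N && (Q < p.1 + p.2)%N) ((p.1 * p.2)%:R ^+ 2)^-1.

Lemma ratr_pair_sum (R : numFieldType) Q : ratr (pair_sum rat Q) = pair_sum R Q.
Proof. by rewrite rmorph_sum; under eq_bigr do rewrite fmorphV rmorphXn rmorph_nat. Qed.

Lemma S2_le_pair_sum Q : S2 Q <= pair_sum rat Q.
Proof.
rewrite /S2 /pair_sum; set s := farey Q; have s_lt := farey_sorted Q.
have jS_lt (j : 'I_(size s).-1) : (j.+1 < size s)%N by rewrite -ltn_predRL.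
have j_lt (j : 'I_(size s).-1) : (j < size s)%N := ltnW (jS_lt j).
have sj_in (j : 'I_(size s).-1) : s`_j \in s by rewrite mem_nth.
have sjS_in (j : 'I_(size s).-1) : s`_j.+1 \in s by rewrite mem_nth.
have sj_lt (j : 'I_(size s).-1) : s`_j < s`_j.+1.
  by rewrite (lt_sorted_ltn_nth 0 s_lt) ?inE.
have sjS_le1 (j : 'I_(size s).-1) : s`_j.+1 <= 1.
  by have := sjS_in j; rewrite mem_farey => /andP[/andP[]].
have sj_lt1 (j : 'I_(size s).-1) : s`_j < 1 := lt_le_trans (sj_lt j) (sjS_le1 j).
pose F (p : 'I_Q.+1 * 'I_Q.+1) : rat := ((p.1 * p.2)%:R ^+ 2)^-1.
apply: (@le_trans _ _ (\sum_(j < (size s).-1) F (farey_pair Q s`_j))).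
  apply: ler_sum => j _; rewrite /F -exprVn farey_pair1 //.
  rewrite lerXn2r ?nnegrE ?invr_ge0 //; first by rewrite subr_ge0 ltW.
  apply: farey_next_sub_le => // z; exact: lt_sorted_nth_next.
apply: (ler_sum_inj (h := fun j : 'I_(size s).-1 => farey_pair Q s`_j)).
- move=> j j' e; apply/val_inj/eqP.
  rewrite -(nth_uniq 0 (j_lt j) (j_lt j')) ?sort_uniq ?undup_uniq //.
  by apply/eqP/(farey_pair_inj (sj_in j) (sj_in j') (sj_lt1 j) (sj_lt1 j')).
- by move=> j; exact: farey_pairP.
- by move=> p _; rewrite /F invr_ge0 exprn_ge0.
Qed.

Lemma ln_ge_1_subV (R : realType) (t : R) : 0 < t -> 1 - t^-1 <= ln t.
Proof.
move=> t_gt0; have := @le_ln1Dx R (t^-1 - 1).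
rewrite addrCA subrr addr0 lnV ?posrE // ltrBrDr addrC subrr invr_gt0 => /(_ t_gt0).
lra.
Qed.

Lemma pade_le_ln (R : realType) (y : R) : 1 <= y -> 2 * (y - 1) <= (y + 1) * ln y.
Proof.
rewrite le_eqVlt => /predU1P[<-|y_gt1]; first by rewrite ln1 subrr !mulr0.
pose g t : R := (t + 1) * ln t - 2 * (t - 1).
pose g' t : R := ln t + (t + 1) / t - 2.
have g_deriv (t : R) : 0 < t -> is_derive t 1 g (g' t).
  move=> t_gt0; have ln_deriv := is_derive1_ln t_gt0.
  by apply: is_derive_eq; rewrite /g' /GRing.scale /=; field; lra.
have g_derivable (t : R) : t \in `[1, y] -> derivable g t 1.
  by rewrite in_itv /= => /andP[t_ge1 _]; apply: ex_derive; apply: g_deriv; lra.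
have g_deriv_in (t : R) : t \in `]1, y[ -> is_derive t 1 g (g' t).
  by rewrite in_itv /= => /andP[t_gt1 _]; apply: g_deriv; lra.
have [c] := MVT y_gt1 g_deriv_in (derivable_within_continuous g_derivable).
rewrite in_itv /= => /andP[c_gt1 _] gE.
have g'c_ge0 : 0 <= g' c.
  have := ln_ge_1_subV (lt_trans ltr01 c_gt1).
  have : (c + 1) / c = 1 + c^-1 by field; lra.
  rewrite /g'; lra.
have : 0 <= g y - g 1 by rewrite gE mulr_ge0 // subr_ge0 ltW.
rewrite /g ln1; lra.
Qed.

Lemma pade_le_ln_sub (R : realType) (a b : R) : 0 < a -> a <= b ->
  2 * (b - a) / (b + a) <= ln b - ln a.
Proof.
move=> a_gt0 ab; have b_gt0 : 0 < b := lt_le_trans a_gt0 ab.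
have := @pade_le_ln R (b / a); rewrite ler_pdivlMr // mul1r ln_div ?posrE // => /(_ ab).
have -> : 2 * (b / a - 1) = 2 * (b - a) / a by field; lra.
have -> : b / a + 1 = (b + a) / a by field; lra.
rewrite [_ / a * _]mulrAC ler_pM2r ?invr_gt0 // => h.
by rewrite ler_pdivrMr ?addr_gt0 // [X in _ <= X]mulrC.
Qed.

Lemma sum_inv_le_ln (R : realType) (Q : nat) : (1 <= Q)%N ->
  \sum_(2 <= q < Q.+1) (q%:R : R)^-1 <= ln (2 * Q%:R + 1) - ln 3.
Proof.
move=> Q_ge1.
have -> : ln (2 * Q%:R + 1) - ln 3 = ln (2 * Q.+1%:R - 1) - ln (2 * 2%:R - 1) :> R.
  by rewrite -natr1; congr (ln _ - ln _); ring.
apply: (ler_sum_telescope (u := fun q => ln (2 * q%:R - 1))) => [//|q /andP[q_ge2 _]].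
have q_ge2' : (2 : R) <= q%:R by rewrite ler_nat.
apply: le_trans (pade_le_ln_sub _ _); rewrite -natr1; try lra.
by rewrite [leRHS](_ : _ = (q%:R : R)^-1) //; field; lra.
Qed.

Lemma sum_inv_odd_le_ln (R : realType) (Q : nat) : (2 <= Q)%N ->
  \sum_(2 <= q < Q.+1) 2 / (2 * (Q%:R - q%:R) + 1) <= 2 + ln (Q%:R - 1 : R).
Proof.
move=> Q_ge2; rewrite big_nat_recr /= 1?addrC; last by lia.
rewrite subrr mulr0 add0r divr1 lerD2l.
have -> : ln (Q%:R - 1) = - ln (Q%:R - Q%:R + 1) - - ln (Q%:R - 2%:R + 1 : R).
  by rewrite subrr add0r ln1 oppr0 opprK add0r; congr ln; ring.
apply: (ler_sum_telescope (u := fun q => - ln (Q%:R - q%:R + 1))) => // q /andP[_ qQ].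
have qQ' : (q%:R : R) + 1 <= Q%:R by rewrite natr1 ler_nat.
rewrite -[q.+1%:R]natr1 (_ : Q%:R - (q%:R + 1) + 1 = Q%:R - q%:R :> R); last by ring.
rewrite opprK [leRHS]addrC; apply: le_trans (pade_le_ln_sub _ _); try lra.
by rewrite [leRHS](_ : _ = 2 / (2 * (Q%:R - q%:R) + 1)) //; field; lra.
Qed.

Lemma sum_inv_sqr_le (R : realType) (m n : nat) : (0 < m <= n)%N ->
  \sum_(m <= r < n) ((r%:R : R) ^+ 2)^-1 <= 2 / (2 * m%:R - 1) - 2 / (2 * n%:R - 1).
Proof.
move=> /andP[m_gt0 mn].
rewrite [leRHS](_ : _ = - (2 / (2 * n%:R - 1)) - - (2 / (2 * m%:R - 1))); last by ring.
apply: (ler_sum_telescope (u := fun r => - (2 / (2 * r%:R - 1)))) => // r /andP[mr _].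
have r_ge1 : (1 : R) <= r%:R by rewrite ler1n; exact: leq_trans mr.
rewrite -[r.+1%:R]natr1 opprK [leRHS]addrC.
rewrite [leRHS](_ : _ = (r%:R ^+ 2 - 4^-1)^-1); last by field; rewrite expr2; nra.
by rewrite lef_pV2 ?posrE expr2; nra.
Qed.

Lemma pair_sum_le (R : realType) (Q : nat) : (2 <= Q)%N -> pair_sum R Q <=
  4 / (2 * Q%:R + 1) ^+ 2 * \sum_(2 <= q < Q.+1) (q%:R^-1 + 2 / (2 * (Q%:R - q%:R) + 1)).
Proof.
move=> Q_ge2; rewrite /pair_sum -(pair_big_dep (fun q : 'I_Q.+1 => (1 < q)%N)
  (fun q r : 'I_Q.+1 => (Q < q + r)%N) (fun q r : 'I_Q.+1 => ((q * r)%:R ^+ 2)^-1)) /=.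
rewrite big_geq_mkord mulr_sumr; apply: ler_sum => q q_gt1.
have qQ : (q <= Q)%N by rewrite -ltnS.
have q_ge2 : (2 : R) <= q%:R by rewrite ler_nat.
have qQ' : (q%:R : R) <= Q%:R by rewrite ler_nat.
rewrite (eq_bigr (fun r : 'I_Q.+1 => (q%:R ^+ 2)^-1 * (r%:R ^+ 2)^-1)); last first.
  by move=> r _; rewrite natrM exprMn invfM.
rewrite -mulr_sumr (eq_bigl (fun r : 'I_Q.+1 => true && ((Q - q).+1 <= r)%N)); last first.
  by move=> r; lia.
rewrite -(big_geq_mkord _ _ xpredT (fun r => ((r%:R : R) ^+ 2)^-1)).
apply: le_trans (ler_wpM2l _ (sum_inv_sqr_le _ _)) _.
- by rewrite invr_ge0 exprn_ge0.
- lia.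
rewrite -[(Q - q).+1%:R]natr1 natrB // -[Q.+1%:R]natr1.
rewrite [leLHS](_ : _ = 4 / (2 * Q%:R + 1) ^+ 2 * (q%:R^-1 + 2 / (2 * (Q%:R - q%:R) + 1))) //.
by field; lra.
Qed.

Lemma farey_constant_estimate (R : realFieldType) (q L : R) :
  2 <= q -> 2 * (q - 1) <= (q + 1) * L -> 4 / (2 * q + 1) ^+ 2 * (2 * L + 8 / 5) * q ^+ 2 < 3 * L.
Proof.
move=> q_ge2 L_ge.
pose P := 4 * q ^+ 2 + 12 * q + 3.
have P_gt0 : 0 < P by rewrite /P expr2; nra.
have key : 32 / 5 * q ^+ 2 < L * P.
  rewrite -(ltr_pM2r (_ : 0 < q + 1)); last by lra.
  apply: lt_le_trans (_ : 2 * (q - 1) * P <= _).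
    by rewrite /P expr2; nra.
  by rewrite [leRHS]mulrAC ler_pM2r // [leRHS]mulrC.
rewrite (_ : _ * q ^+ 2 = (8 * L + 32 / 5) * q ^+ 2 / (2 * q + 1) ^+ 2); last first.
  by field; lra.
rewrite ltr_pdivrMr; last by apply: exprn_gt0; lra.
by rewrite /P !expr2 in key *; lra.
Qed.

Lemma S2_le_ln (R : realType) (Q : nat) : (2 <= Q)%N ->
  ratr (S2 Q) <= 4 / (2 * Q%:R + 1) ^+ 2 * (2 * ln (Q%:R : R) + 8 / 5).
Proof.
move=> Q_ge2; have Q_ge2' : (2 : R) <= Q%:R by rewrite ler_nat.
have := S2_le_pair_sum Q; rewrite -(ler_rat R) ratr_pair_sum => /le_trans; apply.
apply: (le_trans (pair_sum_le R Q_ge2)).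
rewrite ler_wpM2l ?divr_ge0 ?exprn_ge0 // big_split /=.
apply: le_trans (lerD (sum_inv_le_ln R (ltnW Q_ge2)) (sum_inv_odd_le_ln R Q_ge2)) _.
have ln3_sub_ln2 : 2 / 5 <= ln 3 - ln (2 : R).
  apply: le_trans (pade_le_ln_sub _ _); [|lra|lra].
  by rewrite [leRHS](_ : _ = 2 / 5) //; field.
have ln_prod : ln (2 * Q%:R + 1) + ln (Q%:R - 1) <= ln 2 + 2 * ln (Q%:R : R).
  rewrite (_ : 2 * ln _ = ln (Q%:R ^+ 2)); last by rewrite lnXn ?mulr_natl //; lra.
  have Q2_gt0 : (0 : R) < Q%:R ^+ 2 by rewrite exprn_gt0 //; lra.
  by rewrite -!lnM ?posrE // ?ler_ln ?posrE ?mulr_gt0 //; lra.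
lra.
Qed.

Theorem theorem1 (R : realType) (Q : nat) : (1 < Q)%N -> C (R:=R) Q < 3.
Proof.
move=> Q_gt1; have Q_ge2 : (2 : R) <= Q%:R by rewrite ler_nat.
have lnQ_gt0 : 0 < ln (Q%:R : R) by apply: ln_gt0; lra.
have lnQ_ge : 2 * (Q%:R - 1) <= (Q%:R + 1) * ln (Q%:R : R) by apply: pade_le_ln; lra.
rewrite /C ltr_pdivrMr //; apply: le_lt_trans (farey_constant_estimate Q_ge2 lnQ_ge).
by rewrite ler_wpM2r ?exprn_ge0 ?S2_le_ln.
Qed.
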